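(* Let $Q\subset\mathrm{EX}(M)$ be a set of pairwise compatible extensions. Then $Q(M)$ is Hausdorff.
   Context: Conventions: $M$ is an $n$-dimensional smooth manifold (Hausdorff, second countable) with maximal $C^\infty$ atlas $\mathcal{A}(M)$; every chart $\alpha$ has open domain $\mathrm{dom}(\alpha)\subset M$ and open range $\mathrm{ran}(\alpha)\subset\mathbb{R}^n$. For $A\subset\mathbb{R}^n$, $\partial A$ is its boundary in $\mathbb{R}^n$; for $A\subset U\subset\mathbb{R}^n$, $\partial_U A$ is the boundary of $A$ relative to $U$. An admissible boundary point of $\alpha$ is a $p\in\partial\,\mathrm{ran}(\alpha)$ such that every sequence $(x_i)\subset\mathrm{dom}(\alpha)$ with $\alpha(x_i)\to p$ has no accumulation point in $M$; $B(\alpha)$ is the set of these. An extension is a pair $(\alpha,U)$, $U\subset\mathbb{R}^n$ open, $\mathrm{ran}(\alpha)\subset U$, $\emptyset\ne\partial_U\mathrm{ran}(\alpha)\subset B(\alpha)$; $\mathrm{EX}(M)$ is the set of extensions. A boundary set is $(\alpha,U,V)$ with $(\alpha,U)\in\mathrm{EX}(M)$, $V\subset B(\alpha)\cap U$ (a boundary point if $V=\{p\}$). $(\alpha,U,V)$ covers $(\beta,X,Y)$ if for every sequence $(y_i)\subset\mathrm{dom}(\beta)$ with $(\beta(y_i))$ having an accumulation point in $Y$ there is a subsequence $(v_i)\subset\mathrm{dom}(\alpha)$ of $(y_i)$ with $(\alpha(v_i))$ having an accumulation point in $V$; they are equivalent, $\equiv$, if each covers the other. Boundary points $(\alpha,U,\{p\})$,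 $(\beta,X,\{q\})$ are in contact if there is a sequence $(x_i)\subset\mathrm{dom}(\alpha)\cap\mathrm{dom}(\beta)$ with $\alpha(x_i)\to p$ and $\beta(x_i)\to q$. Extensions $(\alpha,U)$, $(\beta,X)$ are compatible if for all $p\in B(\alpha)\cap U$, $q\in B(\beta)\cap X$, being in contact implies $(\alpha,U,\{p\})\equiv(\beta,X,\{q\})$. Completion: for $Q\subset\mathrm{EX}(M)$ let $P=\{(\alpha,\mathrm{ran}(\alpha)):\alpha\in\mathcal{A}(M)\}$, $S_Q=P\cup Q$, $N_{(\alpha,U)}=\mathrm{ran}(\alpha)\cup\partial_U\mathrm{ran}(\alpha)$ with subspace topology of $\mathbb{R}^n$, $N_Q=\bigsqcup_{(\alpha,U)\in S_Q}N_{(\alpha,U)}$ with disjoint-union topology. Identify $x\in N_{(\alpha,U)}$ with $y\in N_{(\beta,X)}$ iff either $x\in\mathrm{ran}(\alpha)$, $y\in\mathrm{ran}(\beta)$, $\beta\circ\alpha^{-1}(x)=y$, or $x\in\partial_U\mathrm{ran}(\alpha)$, $y\in\partial_X\mathrm{ran}(\beta)$, $(\alpha,U,\{x\})\equiv(\beta,X,\{y\})$. $Q(M)$ is the quotient space with the quotient topology. *)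

From HB Require Import structures.
From mathcomp Require Import all_boot all_order all_algebra.
From mathcomp Require Import all_classical all_reals all_analysis.
From Stdlib Require Import Relations.
Set Implicit Arguments. Unset Strict Implicit. Unset Printing Implicit Defensive.
Import Order.TTheory GRing.Theory Num.Theory.
Import numFieldNormedType.Exports.
Local Open Scope classical_set_scope.
Local Open Scope ring_scope.

Section Manifold.
Context {R : realType} {n : nat} {M : topologicalType}.

Notation E := 'rV[R]_n.

Definition chart := (set M * (M -> E))%type.
Definition dom (c : chart) : set M := c.1.
Definition ran (c : chart) : set E := c.2 @` c.1.

(** c is a topological chart: homeomorphism from an open subset of M onto an
    open subset of R^n. *)
Definition is_chart (c : chart) : Prop :=
  [/\ open (dom c), open (ran c),
      (forall x y, dom c x -> dom c y -> c.2 x = c.2 y -> x = y),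
      {within dom c, continuous c.2} &
      (forall O, open O -> O `<=` dom c -> open (c.2 @` O))].

Fixpoint Ck (k : nat) (U : set E) (g : E -> E) : Prop :=
  match k with
  | 0 => {within U, continuous g}
  | k'.+1 => (forall x, U x -> differentiable g x) /\
             (forall v : E, Ck k' U (fun x => 'D_v g x))
  end.
Definition smooth_on (U : set E) (g : E -> E) := forall k, Ck k U g.

(** The transition map beta o alpha^{-1} (on alpha(dom alpha /\ dom beta)). *)
Definition transition (a b : chart) (x : E) : E :=
  xget 0 [set y | exists m, [/\ dom a m, dom b m, a.2 m = x & b.2 m = y]].

Definition smooth_compat (a b : chart) : Prop :=
  smooth_on (a.2 @` (dom a `&` dom b)) (transition a b) /\
  smooth_on (b.2 @` (dom a `&` dom b)) (transition b a).

Definition smooth_atlas (A : set chart) : Prop :=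
  [/\ (forall c, A c -> is_chart c),
      (forall x : M, exists2 c, A c & dom c x) &
      (forall a b, A a -> A b -> smooth_compat a b)].

Definition maximal_atlas (A : set chart) : Prop :=
  smooth_atlas A /\
  (forall c, is_chart c -> (forall d, A d -> smooth_compat c d) -> A c).

Definition bdry (S : set E) : set E := closure S `\` interior S.
Definition rel_bdry (U S : set E) : set E := (closure S `&` U) `\` interior S.

Definition acc_pts {T : topologicalType} (u : nat -> T) : set T :=
  cluster (u @ \oo).

Definition adm_bdry (a : chart) : set E :=
  [set p | bdry (ran a) p /\
    forall x : nat -> M, (forall i, dom a (x i)) ->
      (a.2 \o x @ \oo --> p) -> acc_pts x = set0].

Definition extension := (chart * set E)%type.
Definition EX (A : set chart) : set extension :=
  [set e | [/\ A e.1, open e.2, ran e.1 `<=` e.2,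
              rel_bdry e.2 (ran e.1) !=set0 &
              rel_bdry e.2 (ran e.1) `<=` adm_bdry e.1]].

Definition bset := (chart * set E * set E)%type.

Definition covers (s t : bset) : Prop :=
  let: (a, _, V) := s in let: (b, _, Y) := t in
  forall y : nat -> M, (forall i, dom b (y i)) ->
    (exists2 q, Y q & acc_pts (b.2 \o y) q) ->
    exists phi : nat -> nat, (forall i, (phi i < phi i.+1)%N) /\
      (forall i, dom a (y (phi i))) /\
      exists2 p, V p & acc_pts (a.2 \o (y \o phi)) p.

Definition bequiv (s t : bset) : Prop := covers s t /\ covers t s.

Definition in_contact (a : chart) (p : E) (b : chart) (q : E) : Prop :=
  exists x : nat -> M, [/\ (forall i, dom a (x i) /\ dom b (x i)),
    a.2 \o x @ \oo --> p & b.2 \o x @ \oo --> q].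

Definition compatible (e f : extension) : Prop :=
  forall p q, adm_bdry e.1 p -> e.2 p -> adm_bdry f.1 q -> f.2 q ->
    in_contact e.1 p f.1 q -> bequiv (e.1, e.2, [set p]) (f.1, f.2, [set q]).

(** The completion Q(M).  Points of the disjoint union N_Q are triples
    (alpha, U, x) with (alpha, U) in S_Q and x in N_(alpha,U). *)
Definition SQ (A : set chart) (Q : set extension) : set extension :=
  [set e | (A e.1 /\ e.2 = ran e.1) \/ Q e].

Definition Nset (e : extension) : set E := ran e.1 `|` rel_bdry e.2 (ran e.1).

Definition NQ (A : set chart) (Q : set extension) : set (extension * E) :=
  [set z | SQ A Q z.1 /\ Nset z.1 z.2].

(** Open sets of the disjoint union topology on N_Q. *)
Definition NQ_open (A : set chart) (Q : set extension) (W : set (extension * E)) :=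
  W `<=` NQ A Q /\
  forall e, SQ A Q e -> exists2 O : set E, open O &
    [set x | W (e, x)] = O `&` Nset e.

Definition ident (z w : extension * E) : Prop :=
  let: ((a, U), x) := z in let: ((b, X), y) := w in
  (ran a x /\ ran b y /\
     exists m, [/\ dom a m, dom b m, a.2 m = x & b.2 m = y]) \/
  (rel_bdry U (ran a) x /\ rel_bdry X (ran b) y /\
     bequiv (a, U, [set x]) (b, X, [set y])).

(** Q(M) is Hausdorff (for the quotient topology): distinct classes are
    separated by disjoint open sets of Q(M), i.e. (taking preimages under the
    quotient map) by disjoint open saturated subsets of N_Q. *)
Definition saturated {X : Type} (r : relation X) (W : set X) :=
  forall a b, r a b -> W a -> W b.

Definition QM_hausdorff (A : set chart) (Q : set extension) : Prop :=
  let r := fun z w => NQ A Q z /\ NQ A Q w /\ ident z w in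
  let req := clos_refl_sym_trans _ r in
  forall z w, NQ A Q z -> NQ A Q w -> ~ req z w ->
    exists W1 W2, [/\ NQ_open A Q W1, NQ_open A Q W2,
      saturated req W1, saturated req W2 &
      [/\ W1 z, W2 w & W1 `&` W2 = set0]].

End Manifold.

(** Two non-identified points of N_Q are never in contact: interior points
    in contact are the same point of M since M is Hausdorff, an interior
    point is never in contact with an admissible boundary point (sequences
    approaching the latter have no accumulation point in M), and boundary
    points in contact are equivalent by compatibility.  Failure of contact
    yields balls around the two points whose chart preimages G1, G2 in M are
    disjoint.  Lifting a set G of M to the points (alpha, U, x) of N_Q such
    that alpha maps into G everything it sends near x gives open saturated
    sets (for boundary points because equivalent boundary points are
    approached by the same sequences of M), and the lifts of G1, G2 separate
    the two classes. *)
From HB Require Import structures.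
From mathcomp Require Import all_boot all_order all_algebra.
From mathcomp Require Import all_classical all_reals all_analysis.
From Stdlib Require Import Relations.
Import Order.TTheory GRing.Theory Num.Theory.
Import numFieldNormedType.Exports.
Local Open Scope classical_set_scope.
Local Open Scope ring_scope.
Set Implicit Arguments. Unset Strict Implicit.

Lemma cvg_in_cluster {T : topologicalType} (F : set_system T) {FF : ProperFilter F}
    (p : T) :
  F --> p -> cluster F p.
Proof.
move=> Fp A B FA /Fp FB.
exact: filter_ex (filterI FA FB).
Qed.

Lemma cvg_seq_of_balls (R : archiRealFieldType) (T : Type) (X Y : pseudoMetricType R)
    (P : T -> Prop) (f : T -> X) (g : T -> Y) (p : X) (q : Y) :
  (forall eps : R, 0 < eps -> exists m, [/\ P m, ball p eps (f m) & ball q eps (g m)]) ->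
  exists u : nat -> T, [/\ forall i, P (u i), f \o u @ \oo --> p & g \o u @ \oo --> q].
Proof.
move=> balls.
have /choice [u Hu] : forall k : nat, exists m,
    [/\ P m, ball p k.+1%:R^-1 (f m) & ball q k.+1%:R^-1 (g m)].
  by move=> k; apply: balls; rewrite invr_gt0 ltr0Sn.
have small (eps : R) : 0 < eps -> \forall k \near \oo, k.+1%:R^-1 <= eps.
  by move=> e0; apply: filterS (near_infty_natSinv_lt (PosNum e0)) => k /ltW.
exists u; split; first by move=> i; case: (Hu i).
- apply/cvg_ballP => eps /small; apply: filterS => k keps.
  by case: (Hu k) => _ + _; apply: le_ball.
- apply/cvg_ballP => eps /small; apply: filterS => k keps.
  by case: (Hu k) => _ _; apply: le_ball.
Qed.

Section Charts.
Variables (R : realType) (n : nat) (M : topologicalType).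
Implicit Types (a b c : @chart R n M) (S G : set M).

Definition chart_nbhs_in c (x : 'rV[R]_n) G :=
  exists V, [/\ open V, V x & forall m, dom c m -> V (c.2 m) -> G m].

Lemma nbhs_chart_nbhs_in c m S : is_chart c -> dom c m -> nbhs m S ->
  chart_nbhs_in c (c.2 m) S.
Proof.
case=> odom _ inj _ openmap Dm; rewrite nbhsE => -[B [oB Bm] BS].
exists (c.2 @` (B `&` dom c)); split.
- by apply: openmap; [exact: openI | move=> ? []].
- by exists m.
- by move=> m' Dm' [m'' [Bm'' Dm''] e]; apply: BS; rewrite -(inj _ _ Dm'' Dm' e).
Qed.

Lemma open_chart_preimage c V : is_chart c -> open V -> open (dom c `&` c.2 @^-1` V).
Proof.
case=> odom _ _ + _ oV; rewrite continuous_open_subspace // => cont.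
exact: (continuous_inP _ odom).1 cont V oV.
Qed.

Lemma chart_nbhs_in_transfer a b m G : is_chart a -> is_chart b ->
  dom a m -> dom b m -> chart_nbhs_in a (a.2 m) G -> chart_nbhs_in b (b.2 m) G.
Proof.
move=> ca cb Dam Dbm [V [oV Vam VG]].
have : nbhs m (dom a `&` a.2 @^-1` V) by apply: open_nbhs_nbhs; split;
  [exact: open_chart_preimage | split].
case/(nbhs_chart_nbhs_in cb Dbm) => V' [oV' V'bm V'G].
by exists V'; split => // m' Dbm' /(V'G _ Dbm') [Dam' Vm']; exact: VG.
Qed.

Lemma chart_cvg_inv c m (u : nat -> M) : is_chart c -> dom c m ->
  (forall k, dom c (u k)) -> c.2 \o u @ \oo --> c.2 m -> u @ \oo --> m.
Proof.
move=> cc Dm Du cvu S /(nbhs_chart_nbhs_in cc Dm) [V [oV Vm VS]].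
have uV : (c.2 \o u @ \oo) V by apply: cvu; exact: open_nbhs_nbhs.
exact: filterS (fun k => VS _ (Du k)) uV.
Qed.

Lemma covers_chart_nbhs_in a b U X x y G :
  covers (a, U, [set x]) (b, X, [set y]) ->
  chart_nbhs_in a x G -> chart_nbhs_in b y G.
Proof.
move=> cov [V [oV Vx VG]]; apply: contrapT => nGy.
have [u [Pu cvu _]] : exists u : nat -> M,
    [/\ forall i, dom b (u i) /\ ~ G (u i), b.2 \o u @ \oo --> y
      & b.2 \o u @ \oo --> y].
  apply: (@cvg_seq_of_balls R _ _ _ (fun m => dom b m /\ ~ G m)) => eps e0.
  apply: contrapT => nm; apply: nGy.
  exists (ball y eps); split; [exact: ball_open | exact: ballxx |].
  move=> m Dm By; apply: contrapT => nG; apply: nm; exists m; split => //.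
have [phi [_ [Dau [p -> clx]]]] :=
  cov u (fun i => (Pu i).1) (ex_intro2 _ _ y erefl (cvg_in_cluster cvu)).
have near_range : \forall k \near \oo, range (a.2 \o (u \o phi)) (a.2 (u (phi k))).
  by apply: nearW => k; exists k.
have [_ [[i _ <-] Vi]] := clx _ V near_range (open_nbhs_nbhs (conj oV Vx)).
by case: (Pu (phi i)) => _; apply; exact: VG (Dau i) Vi.
Qed.

Lemma not_in_contact_balls a b x y : ~ in_contact a x b y ->
  exists2 eps : R, 0 < eps & forall m, dom a m -> dom b m ->
    ball x eps (a.2 m) -> ball y eps (b.2 m) -> False.
Proof.
move=> nc; apply: contrapT => nballs; apply: nc.
apply: (@cvg_seq_of_balls R _ _ _ (fun m => dom a m /\ dom b m)) => eps e0.
apply: contrapT => nm; apply: nballs; exists eps => // m Da Db Bx By.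
by apply: nm; exists m.
Qed.

Lemma in_contact_sym a b x y : in_contact a x b y -> in_contact b y a x.
Proof. by case=> u [Du cvx cvy]; exists u; split => // i; case: (Du i). Qed.

Lemma in_contact_chart_eq a b m1 m2 : hausdorff_space M -> is_chart a -> is_chart b ->
  dom a m1 -> dom b m2 -> in_contact a (a.2 m1) b (b.2 m2) -> m1 = m2.
Proof.
move=> HM ca cb Dm1 Dm2 [u [Du cv1 cv2]].
apply: (cvg_unique HM (F := u @ \oo)).
- exact: chart_cvg_inv ca Dm1 (fun i => (Du i).1) cv1.
- exact: chart_cvg_inv cb Dm2 (fun i => (Du i).2) cv2.
Qed.

Lemma adm_bdry_not_in_contact a b m y : is_chart a -> dom a m -> adm_bdry b y ->
  ~ in_contact a (a.2 m) b y.
Proof.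
move=> ca Dm [_ noacc] [u [Du cvm cvy]].
have : acc_pts u m.
  exact/cvg_in_cluster/(chart_cvg_inv ca Dm (fun i => (Du i).1)).
by rewrite (noacc u (fun i => (Du i).2) cvy).
Qed.

End Charts.

Section Completion.
Variables (R : realType) (n : nat) (M : topologicalType).
Variables (A : set (@chart R n M)) (Q : set (@extension R n M)).
Hypothesis HA : maximal_atlas A.
Hypothesis HQ : Q `<=` EX A.

Local Notation point := (@extension R n M * 'rV[R]_n)%type.
Local Notation related := (clos_refl_sym_trans _
  (fun z w : point => NQ A Q z /\ NQ A Q w /\ ident z w)).
Implicit Types (z w : point) (G : set M).

Definition QM_separated z w := exists W1 W2,
  [/\ NQ_open A Q W1, NQ_open A Q W2, saturated related W1, saturated related W2 &
      [/\ W1 z, W2 w & W1 `&` W2 = set0]].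

Lemma SQ_is_chart e : SQ A Q e -> is_chart e.1.
Proof. by case: HA => -[chartA _ _] _; case=> [[/chartA]|/HQ [/chartA]]. Qed.

(** Charts have open range, so only the extensions in [Q] contribute boundary points. *)
Lemma SQ_rel_bdry e x : SQ A Q e -> rel_bdry e.2 (ran e.1) x -> Q e /\ adm_bdry e.1 x.
Proof.
move=> SQe bx; have Qe : Q e.
  case: (SQe) bx => [[_ e2] [[_ Ux] nint]|//]; exfalso; apply: nint.
  have [_ oran _ _ _] := SQ_is_chart SQe.
  by rewrite e2 in Ux; exact: open_nbhs_nbhs.
by split => //; case: (HQ Qe) => _ _ _ _; apply.
Qed.

Lemma ident_sym z w : ident z w -> ident w z.
Proof.
move: z w => [[a U] x] [[b X] y] /= [[rx [ry [m []]]]|[bx [by' []]]].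
- by left; do 2!split => //; exists m.
- by right; do 2!split => //.
Qed.

Definition chart_lift G : set point :=
  [set z | NQ A Q z /\ chart_nbhs_in z.1.1 z.2 G].

Lemma open_chart_lift G : NQ_open A Q (chart_lift G).
Proof.
split=> [z []//|e SQe].
exists [set x | chart_nbhs_in e.1 x G].
- rewrite openE => x [V [oV Vx VG]].
  by apply: filterS (open_nbhs_nbhs (conj oV Vx)) => y Vy; exists V.
- by apply/seteqP; split=> x /= [] => [[_ Nx] Gx | Gx Nx].
Qed.

Lemma chart_lift_ident G z w : NQ A Q z -> NQ A Q w -> ident z w ->
  chart_lift G z -> chart_lift G w.
Proof.
move: z w => [[a U] x] [[b X] y] Nz Nw zw [_ Gx]; split => //=.
case: zw => [[_ [_ [m [Da Db ax <-]]]]|[_ [_ [cov _]]]]; last first.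
  exact: covers_chart_nbhs_in cov Gx.
rewrite -ax in Gx.
exact: chart_nbhs_in_transfer (SQ_is_chart Nz.1) (SQ_is_chart Nw.1) Da Db Gx.
Qed.

Lemma saturated_chart_lift G : saturated related (chart_lift G).
Proof.
move=> z0 w0 h; suff: chart_lift G z0 <-> chart_lift G w0 by case.
elim: h => {z0 w0} [z w [Nz [Nw zw]]|z|z w _ [h1 h2]|z w v _ [h1 h2] _ [h3 h4]].
- split; first exact: chart_lift_ident.
  exact: chart_lift_ident Nw Nz (ident_sym zw).
- by [].
- by split.
- by split=> ?; [apply: h3; apply: h1 | apply: h2; apply: h4].
Qed.

Lemma chart_lift_disjoint G1 G2 : G1 `&` G2 = set0 ->
  chart_lift G1 `&` chart_lift G2 = set0.
Proof.
move=> G12; rewrite -subset0 => z [[[_ Nx] [V1 [oV1 V1x G1V]]] [_ [V2 [oV2 V2x G2V]]]].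
have clx : closure (ran z.1.1) z.2 by case: Nx => [/subset_closure|[[]]].
have [_ [[m Dm <-] [V1m V2m]]] :=
  clx _ (open_nbhs_nbhs (conj (openI oV1 oV2) (conj V1x V2x))).
suff : (G1 `&` G2) m by rewrite G12.
by split; [exact: G1V | exact: G2V].
Qed.

Lemma separated_of_disjoint z w G1 G2 : G1 `&` G2 = set0 ->
  NQ A Q z -> NQ A Q w -> chart_nbhs_in z.1.1 z.2 G1 -> chart_nbhs_in w.1.1 w.2 G2 ->
  QM_separated z w.
Proof.
move=> G12 Nz Nw G1z G2w; exists (chart_lift G1), (chart_lift G2).
split; try exact: open_chart_lift; try exact: saturated_chart_lift.
by split => //; exact: chart_lift_disjoint.
Qed.

Lemma separated_of_not_in_contact z w : NQ A Q z -> NQ A Q w ->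
  ~ in_contact z.1.1 z.2 w.1.1 w.2 -> QM_separated z w.
Proof.
move=> Nz Nw /not_in_contact_balls [eps e0 nballs].
pose ball_preim (c : @chart R n M) x := [set m | dom c m /\ ball x eps (c.2 m)].
apply: (@separated_of_disjoint _ _ (ball_preim z.1.1 z.2) (ball_preim w.1.1 w.2)) => //.
- by rewrite -subset0 => m [[Da Bz] [Db Bw]]; exact: nballs Da Db Bz Bw.
- by exists (ball z.2 eps); split; [exact: ball_open | exact: ballxx |].
- by exists (ball w.2 eps); split; [exact: ball_open | exact: ballxx |].
Qed.

Hypothesis HM : hausdorff_space M.
Hypothesis Hcomp : forall e f, Q e -> Q f -> compatible e f.

Lemma not_related_not_in_contact z w : NQ A Q z -> NQ A Q w -> ~ related z w ->
  ~ in_contact z.1.1 z.2 w.1.1 w.2.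
Proof.
move: z w => [[a U] x] [[b X] y] Nz Nw nrel /=.
have /= [[SQz Nx] [SQw Ny]] := (Nz, Nw).
have [ca cb] := (SQ_is_chart SQz, SQ_is_chart SQw).
case: Nx => [[m1 D1 /= ax]|bx]; case: Ny => [[m2 D2 /= by_]|by']; subst.
- move=> /(in_contact_chart_eq HM ca cb D1 D2) m12; subst m2; apply: nrel.
  apply: rst_step; split; [done | split; [done | left]].
  by split; [exists m1 | split; [exists m1 | exists m1]].
- exact: adm_bdry_not_in_contact ca D1 (SQ_rel_bdry SQw by').2.
- by move/in_contact_sym; exact: adm_bdry_not_in_contact cb D2 (SQ_rel_bdry SQz bx).2.
- have [[Qz admx] [Qw admy]] := (SQ_rel_bdry SQz bx, SQ_rel_bdry SQw by').
  move=> /(Hcomp Qz Qw admx bx.1.2 admy by'.1.2) equiv; apply: nrel.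
  by apply: rst_step; split; [done | split; [done | right]].
Qed.

End Completion.

Theorem mainTheorem8 (R : realType) (n : nat) (M : topologicalType)
  (A : set (@chart R n M))
  (HM : hausdorff_space M) (HM2 : @second_countable M) (HA : maximal_atlas A)
  (Q : set (@extension R n M)) (HQ : Q `<=` EX A)
  (Hcomp : forall e f, Q e -> Q f -> compatible e f) :
  QM_hausdorff A Q.
Proof.
move=> z w Nz Nw nrel.
apply: (separated_of_not_in_contact HA HQ) => //.
exact: (not_related_not_in_contact HA HQ HM Hcomp).
Qed.
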